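(* Let $n\ge 3$ and $d\ge 2$. For every biseparable state $\rho$ on $(\mathbb{C}^d)^{\otimes n}$, $$\mathcal{C}_{n-1}(\rho)\le \max[A,B],$$ where $A=d^n-2d^{n/2}+1$ and $B=(d-1)(d^{n-1}-1)+d^{n-1}-1-\frac{n}{n-1}(d^{n-3}-1)$.
   Context: Consider $n$ qudits with Hilbert space $(\mathbb{C}^d)^{\otimes n}$. Let $\lambda_0=\mathbb{1}_d$ and let $\lambda_1,\dots,\lambda_{d^2-1}$ be Hermitian traceless $d\times d$ matrices normalized so that $\mathrm{Tr}[\lambda_i\lambda_j]=d\,\delta_{ij}$. For a nonempty subset $\alpha\subseteq\{1,\dots,n\}$ and a state $\rho$ with reduced state $\rho_\alpha$, define $\|\tau_\alpha(\rho)\|^2=\sum_{(i_k)_{k\in\alpha}\in\{1,\dots,d^2-1\}^{\alpha}}\big(\mathrm{Tr}[\rho_\alpha\bigotimes_{k\in\alpha}\lambda_{i_k}]\big)^2$, and $\mathcal{C}_{n-1}(\rho)=\sum_{|\alpha|\ge n-1}\|\tau_\alpha(\rho)\|^2$. A state is biseparable if it is a convex combination of pure states each of which is a product $|\phi\rangle_\beta\otimes|\chi\rangle_{\overline{\beta}}$ for some bipartition $\{1,\dots,n\}=\beta\,\dot\cup\,\overline\beta$ into nonempty sets (the bipartition may differ between terms). *)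

From HB Require Import structures.
From mathcomp Require Import all_boot all_order all_algebra.
From mathcomp Require Import reals.
From mathcomp Require Export complex.

Set Implicit Arguments.
Unset Strict Implicit.
Unset Printing Implicit Defensive.

Import Order.TTheory GRing.Theory Num.Theory.
Local Open Scope ring_scope.

Section QuditDefs.
Variable R : realType.
Local Notation C := R[i].
Variables n d : nat.

(* Computational basis of (C^d)^{\otimes n}: basis vectors |x_1 ... x_n>
   are labelled by configurations x : 'I_n -> 'I_d. *)
Definition config := {ffun 'I_n -> 'I_d}.

Definition vec := config -> C.
Definition op := config -> config -> C.

Definition cconj (z : C) : C := Num.conj z.

Definition normalized (psi : vec) : Prop :=
  \sum_(x : config) psi x * cconj (psi x) = 1.

(* phi only depends on the tensor factors in beta, i.e. phi is (the coordinate
   function of) a vector of (C^d)^{\otimes beta} *)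
Definition depends_only_on (beta : {set 'I_n}) (phi : vec) : Prop :=
  forall x y : config, (forall k, k \in beta -> x k = y k) -> phi x = phi y.

(* psi = |phi>_beta (x) |chi>_{complement of beta} *)
Definition product_across (beta : {set 'I_n}) (psi : vec) : Prop :=
  exists phi chi : vec,
    [/\ depends_only_on beta phi, depends_only_on (~: beta) chi &
        forall x, psi x = phi x * chi x].

Definition biproduct (psi : vec) : Prop :=
  exists beta : {set 'I_n},
    [/\ beta != set0, beta != [set: 'I_n] & product_across beta psi].

Definition biseparable (rho : op) : Prop :=
  exists (m : nat) (p : 'I_m -> R) (psi : 'I_m -> vec),
    [/\ forall k, 0 <= p k,
        \sum_(k < m) p k = 1,
        forall k, normalized (psi k) /\ biproduct (psi k) &
        forall x y, rho x y = \sum_(k < m) real_complex R (p k) * psi k x * cconj (psi k y)].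

Definition gm_basis (lam : 'I_(d ^ 2 - 1) -> 'M[C]_d) : Prop :=
  [/\ forall i a b, lam i a b = cconj (lam i b a),
      forall i, \tr (lam i) = 0 &
      forall i j, \tr (lam i *m lam j) = (d * (i == j))%:R].

Variable lam : 'I_(d ^ 2 - 1) -> 'M[C]_d.

(* local operator: None stands for lam_0 = identity, Some i for lam_i *)
Definition loc_op (o : option 'I_(d ^ 2 - 1)) : 'M[C]_d :=
  if o is Some i then lam i else 1%:M.

Definition tens_op (mu : {ffun 'I_n -> option 'I_(d ^ 2 - 1)}) : op :=
  fun x y => \prod_(k < n) loc_op (mu k) (x k) (y k).

Definition supp (mu : {ffun 'I_n -> option 'I_(d ^ 2 - 1)}) : {set 'I_n} :=
  [set k | mu k != None].

(* Tr[rho_alpha (x)_{k in alpha} lam_{i_k}] = Tr[rho ((x)_{k in alpha} lam_{i_k} (x) 1)]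
   where alpha = supp mu (real part taken; the trace is real for Hermitian rho) *)
Definition corr (rho : op) (mu : {ffun 'I_n -> option 'I_(d ^ 2 - 1)}) : R :=
  complex.Re (\sum_(x : config) \sum_(y : config) rho x y * tens_op mu y x).

(* ||tau_alpha(rho)||^2 : sum over all (i_k)_{k in alpha} in {1..d^2-1}^alpha *)
Definition tau_norm2 (alpha : {set 'I_n}) (rho : op) : R :=
  \sum_(mu : {ffun 'I_n -> option 'I_(d ^ 2 - 1)} | supp mu == alpha)
     (corr rho mu) ^+ 2.

Definition C_nm1 (rho : op) : R :=
  \sum_(alpha : {set 'I_n} | (n.-1 <= #|alpha|)%N) tau_norm2 alpha rho.

End QuditDefs.

From mathcomp Require Import all_boot all_order all_algebra.
From mathcomp Require Import reals.
From mathcomp Require Import complex.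
From mathcomp Require Import ring lra zify.

(* For a pure state psi and a set S of parties, completeness of the local basis
   gives sum_(alpha \subset S) ||tau_alpha||^2 = d^|S| Tr[psi_S^2].  If psi is a
   product across the bipartition beta | ~beta, both purities equal 1, so these
   weights are d^|beta| and d^|~beta|.  Counting with multiplicities which
   supports lie below which sets bounds C_(n-1)(psi): when both parts have at
   least two parties, C_(n-1)(psi) <= d^n - d^|beta| - d^|~beta| + 1 <= A by
   AM-GM; when beta = {g} is a single party, the n - 1 sets ~{g,i} each carry
   weight at least d^(n-3) (as Tr[psi_{g,i}^2] >= 1/d), which yields B.
   Convexity of the square carries the bound from pure states to mixtures. *)

Set Implicit Arguments.
Unset Strict Implicit.
Unset Printing Implicit Defensive.

Import Order.TTheory GRing.Theory Num.Theory.
Local Open Scope ring_scope.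

Section LocalBasis.
Variable R : realType.
Variable d : nat.
Hypothesis d_gt0 : (0 < d)%N.
Variable lam : 'I_(d ^ 2 - 1) -> 'M[R[i]]_d.
Hypothesis lam_gm : gm_basis lam.

Local Notation L := (loc_op lam).
Local Notation loc := (option 'I_(d ^ 2 - 1)).
Local Notation entry := ('I_d * 'I_d)%type.

Lemma conj_loc_op o a b : (L o a b)^* = L o b a.
Proof.
case: lam_gm => lam_herm _ _; case: o => [i|] /=; first by rewrite lam_herm conjCK.
by rewrite !mxE eq_sym; case: (b == a); rewrite ?conjC1 ?conjC0.
Qed.

Lemma trace_loc_op_mul o o' :
  \sum_(a : 'I_d) \sum_(b : 'I_d) L o a b * L o' b a = (d * (o == o'))%:R.
Proof.
have -> : \sum_a \sum_b L o a b * L o' b a = \tr (L o *m L o').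
  by apply: eq_bigr => a _; rewrite mxE.
case: lam_gm => _ lam_tr lam_orth.
case: o => [i|]; case: o' => [j|] /=.
- exact: lam_orth.
- by rewrite mulmx1 lam_tr muln0.
- by rewrite mul1mx lam_tr muln0.
- by rewrite mulmx1 mxtrace1 muln1.
Qed.

Lemma card_entry : #|{: entry}| = #|{: loc}|.
Proof.
by rewrite card_prod card_option !card_ord mulnn subn1 prednK // expn_gt0 d_gt0.
Qed.

Definition loc_of (i : 'I_#|{: loc}|) : loc := enum_val i.
Definition entry_of (j : 'I_#|{: loc}|) : entry :=
  enum_val (cast_ord (esym card_entry) j).

Lemma entry_of_bij : bijective entry_of.
Proof.
exists (fun p => cast_ord card_entry (enum_rank p)) => [j|p].
  by rewrite /entry_of enum_valK cast_ordKV.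
by rewrite /entry_of cast_ordK enum_rankK.
Qed.

(* Row [o] lists the entries of [L o]; orthogonality of the [L o] says that the
   rows are orthogonal, and for a square matrix this forces the columns to be
   orthogonal too, which is the completeness relation. *)
Definition loc_op_mx : 'M[R[i]]_#|{: loc}| :=
  \matrix_(i, j) L (loc_of i) (entry_of j).1 (entry_of j).2.
Definition loc_op_mx_adj : 'M[R[i]]_#|{: loc}| := \matrix_(i, j) (loc_op_mx j i)^*.

Lemma loc_op_mx_mul_adj : loc_op_mx *m loc_op_mx_adj = (d%:R)%:M.
Proof.
apply/matrixP => i i'; rewrite !mxE.
transitivity (\sum_(p : entry) L (loc_of i) p.1 p.2 * L (loc_of i') p.2 p.1).
  rewrite [RHS](reindex entry_of) /=; last exact/onW_bij/entry_of_bij.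
  by apply: eq_bigr => j _; rewrite !mxE conj_loc_op.
rewrite -(pair_big xpredT xpredT (fun a b => L (loc_of i) a b * L (loc_of i') b a)) /=.
rewrite trace_loc_op_mul (inj_eq enum_val_inj).
by case: (i == i'); rewrite ?muln1 ?muln0.
Qed.

Lemma loc_op_mx_adj_mul : loc_op_mx_adj *m loc_op_mx = (d%:R)%:M.
Proof.
have d_neq0 : (d%:R : R[i]) != 0 by rewrite pnatr_eq0 -lt0n.
have right_inv : loc_op_mx *m ((d%:R)^-1 *: loc_op_mx_adj) = 1%:M.
  by rewrite -scalemxAr loc_op_mx_mul_adj -scalemx1 scalerA mulVf // scale1r.
have := congr1 (fun A => (d%:R : R[i]) *: A) (mulmx1C right_inv).
by rewrite -scalemxAl scalerA mulfV // scale1r scalemx1.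
Qed.

Lemma loc_op_completeness (a b a' b' : 'I_d) :
  \sum_(o : loc) L o b a * L o a' b' = (d * ((a == a') && (b == b')))%:R.
Proof.
case: entry_of_bij => g _ gK.
transitivity ((loc_op_mx_adj *m loc_op_mx) (g (a, b)) (g (a', b'))).
  rewrite mxE (reindex loc_of) /=; last exact/onW_bij/(enum_val_bij _).
  by apply: eq_bigr => i _; rewrite !mxE !gK conj_loc_op.
rewrite loc_op_mx_adj_mul mxE (can_eq gK) xpair_eqE.
by case: (_ && _); rewrite ?muln1 ?muln0.
Qed.

End LocalBasis.

Lemma prod_natr_bool (V : comPzRingType) (I : finType) (b : I -> bool) :
  \prod_k ((b k)%:R : V) = ([forall k, b k])%:R.
Proof.
case: (boolP [forall k, b k]) => [/forallP b_all | /forallPn [k bk]].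
  by rewrite big1 // => k _; rewrite b_all.
by rewrite (bigD1 k) //= (negbTE bk) mul0r.
Qed.

Lemma sqr_Re_real (R : rcfType) (z : R[i]) :
  z^* = z -> ((complex.Re z ^+ 2)%:C)%C = z * z^*.
Proof.
case: z => a b /= /(congr1 (@complex.Im R)) /= bN; have -> : b = 0 by lra.
by apply/eqP; rewrite eq_complex /= oppr0 !mulr0 mul0r subr0 addr0 expr2 !eqxx.
Qed.

Lemma sumr_mul_eq_natr (V : pzSemiRingType) (I : finType) (F : I -> V) t :
  \sum_i F i * (i == t)%:R = F t.
Proof.
by rewrite (bigD1 t) //= eqxx mulr1 big1 ?addr0 // => i /negbTE ->; rewrite mulr0.
Qed.

Section PureState.
Variable R : realType.
Variables n d : nat.
Hypothesis d_gt0 : (0 < d)%N.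
Variable lam : 'I_(d ^ 2 - 1) -> 'M[R[i]]_d.
Hypothesis lam_gm : gm_basis lam.

Local Notation L := (loc_op lam).
Local Notation cfg := (config n d).
Local Notation mus := {ffun 'I_n -> option 'I_(d ^ 2 - 1)}.
Implicit Types (psi : vec R n d) (mu : mus) (S : {set 'I_n}).

Definition splice S (u v : cfg) : cfg := [ffun k => if k \in S then u k else v k].

Lemma splice_setC S u v : splice (~: S) u v = splice S v u.
Proof. by apply/ffunP => k; rewrite !ffunE inE; case: (k \in S). Qed.

Definition expect psi mu : R[i] :=
  \sum_(x : cfg) \sum_(y : cfg) psi x * (psi y)^* * tens_op lam mu y x.

(* Tr[psi_S^2], written with the swap trick: exchanging the S-parts of two
   copies of psi. *)
Definition purity psi S : R[i] :=
  \sum_(x : cfg) \sum_(y : cfg)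
    psi x * psi y * (psi (splice S y x))^* * (psi (splice S x y))^*.

Lemma conj_tens_op mu x y : (tens_op lam mu x y)^* = tens_op lam mu y x.
Proof. by rewrite /tens_op rmorph_prod; apply: eq_bigr => k _; apply: conj_loc_op. Qed.

Lemma conj_expect psi mu : (expect psi mu)^* = expect psi mu.
Proof.
rewrite /expect rmorph_sum exchange_big; apply: eq_bigr => x _.
rewrite rmorph_sum; apply: eq_bigr => y _.
by rewrite !rmorphM /= conj_tens_op conjCK [psi y * _]mulrC.
Qed.

Lemma sum_supp_subset_prod S (f : 'I_n -> option 'I_(d ^ 2 - 1) -> R[i]) :
  \sum_(mu : mus | supp mu \subset S) \prod_(k < n) f k (mu k)
  = \prod_(k < n) (if k \in S then \sum_o f k o else f k None).
Proof.
pose h k o := if (k \in S) || (o == None) then f k o else 0.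
transitivity (\prod_(k < n) \sum_o h k o); last first.
  apply: eq_bigr => k _; rewrite /h; case: (k \in S) => //=.
  by rewrite -big_mkcond (big_pred1_eq _ None).
rewrite bigA_distr_bigA /= big_mkcond /=; apply: eq_bigr => mu _.
case: (boolP (supp mu \subset S)) => [muS | /subsetPn [k]].
  apply: eq_bigr => k _; rewrite /h; case: eqP => [-> | /eqP mu_k]; rewrite ?orbT //.
  by move/subsetP/(_ k): muS; rewrite inE mu_k => ->.
rewrite inE => mu_k kS.
by rewrite (bigD1 k) //= /h (negbTE kS) (negbTE mu_k) mul0r.
Qed.

Lemma sum_tens_op_mul S (x y x' y' : cfg) :
  \sum_(mu : mus | supp mu \subset S) tens_op lam mu y x * tens_op lam mu x' y'
  = (d ^ #|S|)%:R * ((y == splice S y' x) && (x' == splice S x y'))%:R.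
Proof.
under eq_bigr do rewrite -big_split /=.
rewrite (sum_supp_subset_prod S (fun k o => L o (y k) (x k) * L o (x' k) (y' k))).
pose c k := if k \in S then (x k == x' k) && (y k == y' k)
            else (y k == x k) && (x' k == y' k).
transitivity (\prod_(k < n) ((if k \in S then d else 1%N)%:R * (c k)%:R : R[i])).
  apply: eq_bigr => k _; rewrite /c; case: (k \in S).
    by rewrite /= loc_op_completeness // natrM.
  by rewrite /= !mxE mul1r -mulnb natrM.
rewrite big_split /= prod_natr_bool; congr (_ * _%:R).
  rewrite natrX -prodr_const [RHS]big_mkcond /=.
  by apply: eq_bigr => k _; case: (k \in S).
congr (nat_of_bool _); apply/idP/andP => [/forallP c_all | ].
  by split; apply/eqP/ffunP => k; rewrite ffunE;
    move: (c_all k); rewrite /c; case: (k \in S) => /andP [/eqP ? /eqP ?].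
move=> [/eqP yE /eqP x'E]; apply/forallP => k.
by rewrite /c yE x'E !ffunE; case: (k \in S); rewrite !eqxx.
Qed.

Lemma expect_sqr psi mu : expect psi mu * expect psi mu =
  \sum_(x : cfg) \sum_(y : cfg) \sum_(x' : cfg) \sum_(y' : cfg)
    psi x * (psi y)^* * ((psi x')^* * psi y') *
    (tens_op lam mu y x * tens_op lam mu x' y').
Proof.
rewrite {1}/expect mulr_suml; apply: eq_bigr => x _; rewrite mulr_suml.
apply: eq_bigr => y _; rewrite /expect exchange_big mulr_sumr.
apply: eq_bigr => x' _; rewrite mulr_sumr; apply: eq_bigr => y' _; ring.
Qed.

Lemma sum_sqr_expect S psi :
  \sum_(mu : mus | supp mu \subset S) ((complex.Re (expect psi mu) ^+ 2)%:C)%C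
  = (d ^ #|S|)%:R * purity psi S.
Proof.
under eq_bigr do rewrite sqr_Re_real ?conj_expect // expect_sqr.
rewrite exchange_big; under eq_bigr do rewrite exchange_big.
under eq_bigr do under eq_bigr do rewrite exchange_big.
under eq_bigr do under eq_bigr do under eq_bigr do rewrite exchange_big.
under eq_bigr do under eq_bigr do under eq_bigr do under eq_bigr do
  rewrite -mulr_sumr sum_tens_op_mul.
rewrite /purity mulr_sumr; apply: eq_bigr => x _.
under eq_bigr do rewrite exchange_big.
rewrite exchange_big mulr_sumr; apply: eq_bigr => y' _.
transitivity (\sum_(y : cfg) \sum_(x' : cfg)
  psi x * (psi y)^* * ((psi x')^* * psi y') * (d ^ #|S|)%:R *
  (y == splice S y' x)%:R * (x' == splice S x y')%:R).
  by apply: eq_bigr => y _; apply: eq_bigr => x' _; rewrite -mulnb natrM; ring.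
under eq_bigr do rewrite sumr_mul_eq_natr.
by rewrite sumr_mul_eq_natr; ring.
Qed.

Definition sq_corr psi mu : R := complex.Re (expect psi mu) ^+ 2.

Definition weight psi S : R := \sum_(mu : mus | supp mu \subset S) sq_corr psi mu.

Lemma weightE psi S : weight psi S = (d ^ #|S|)%:R * complex.Re (purity psi S).
Proof.
have := congr1 (@complex.Re R) (sum_sqr_expect S psi).
rewrite /weight /sq_corr -rmorph_sum /=.
rewrite -[((d ^ #|S|)%:R : R[i])](rmorph_nat (@real_complex R)) => ->.
by case: (purity psi S) => a b /=; ring.
Qed.

Lemma weight_subset psi (S T : {set 'I_n}) :
  S \subset T -> weight psi S <= weight psi T.
Proof.
move=> ST; rewrite /weight big_mkcond [leRHS]big_mkcond /=.
apply: ler_sum => mu _; case: ifP => [/subset_trans/(_ ST) -> // | _].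
by case: ifP => _; rewrite ?sqr_ge0.
Qed.

Lemma purity_setC psi S : purity psi (~: S) = purity psi S.
Proof. by apply: eq_bigr => x _; apply: eq_bigr => y _; rewrite !splice_setC; ring. Qed.

Lemma purity_product psi S (phi chi : vec R n d) :
  depends_only_on S phi -> depends_only_on (~: S) chi ->
  (forall x, psi x = phi x * chi x) -> normalized psi -> purity psi S = 1.
Proof.
move=> phiS chiSC psiE psi_norm.
have phi_splice u v : phi (splice S u v) = phi u.
  by apply: phiS => k kS; rewrite ffunE kS.
have chi_splice u v : chi (splice S u v) = chi v.
  by apply: chiSC => k; rewrite inE => /negbTE kS; rewrite ffunE kS.
transitivity ((\sum_(x : cfg) psi x * cconj (psi x)) *
              (\sum_(x : cfg) psi x * cconj (psi x))); last by rewrite psi_norm mulr1.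
rewrite /cconj mulr_suml; apply: eq_bigr => x _.
rewrite mulr_sumr; apply: eq_bigr => y _.
by rewrite !psiE !phi_splice !chi_splice !rmorphM; ring.
Qed.

Lemma purity_setT psi : normalized psi -> purity psi setT = 1.
Proof.
apply: (@purity_product psi setT psi (fun _ => 1)) => // [x y xy | x].
  by congr psi; apply/ffunP => k; apply: xy (in_setT k).
by rewrite mulr1.
Qed.

Lemma weight_purity1 psi S : purity psi S = 1 -> weight psi S = (d ^ #|S|)%:R.
Proof. by rewrite weightE => ->; rewrite mulr1. Qed.

Lemma weight_setT psi : normalized psi -> weight psi setT = (d ^ n)%:R.
Proof. by move=> /purity_setT/weight_purity1 ->; rewrite cardsT card_ord. Qed.

Lemma weight_set0 psi : normalized psi -> weight psi set0 = 1.
Proof.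
by move=> psi_norm; rewrite weight_purity1 ?cards0 // -setCT purity_setC purity_setT.
Qed.

End PureState.

Lemma amgm_sqrt (R : rcfType) (u v : R) :
  0 <= u -> 0 <= v -> 2 * Num.sqrt (u * v) <= u + v.
Proof.
move=> u_ge0 v_ge0; rewrite sqrtrM //.
rewrite -{2}(sqr_sqrtr u_ge0) -{2}(sqr_sqrtr v_ge0) -subr_ge0.
set a := Num.sqrt u; set b := Num.sqrt v.
by rewrite (_ : _ - _ = (a - b) ^+ 2) ?sqr_ge0 //; ring.
Qed.

Lemma weighted_count_arith (R : realFieldType) (N dd X D C : R) :
  3 <= N -> 1 <= D ->
  (N - 1) * D + (N - 2) * dd <= (N - 2) * (dd * X - C) + (N - 1) ->
  C <= (dd - 1) * (X - 1) + X - 1 - N / (N - 1) * (D - 1).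
Proof.
move=> N_ge3 D_ge1 count.
have N1_gt0 : 0 < N - 1 by lra.
have frac_le : (N - 2) * (N / (N - 1) * (D - 1)) <= (N - 1) * (D - 1).
  rewrite -(ler_pM2r N1_gt0) mulrA [_ * (D - 1)]mulrC !mulrA divfK ?lt0r_neq0 //.
  nra.
have : 0 <= (N - 2) * (dd * X - dd - N / (N - 1) * (D - 1) - C) by nra.
by rewrite pmulr_rge0; lra.
Qed.

Definition biseparable_bound (R : realType) (n d : nat) : R :=
  Num.max
    ((d%:R : R) ^+ n - 2 * Num.sqrt ((d%:R : R) ^+ n) + 1)
    (((d%:R : R) - 1) * ((d%:R : R) ^+ n.-1 - 1) + (d%:R : R) ^+ n.-1 - 1
      - (n%:R : R) / ((n%:R : R) - 1) * ((d%:R : R) ^+ (n - 3) - 1)).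

Section BiproductBound.
Variable R : realType.
Variables n d : nat.
Hypothesis n_ge3 : (3 <= n)%N.
Hypothesis d_ge2 : (2 <= d)%N.
Variable lam : 'I_(d ^ 2 - 1) -> 'M[R[i]]_d.
Hypothesis lam_gm : gm_basis lam.
Variable psi : vec R n d.
Hypothesis psi_norm : normalized psi.

Local Notation mus := {ffun 'I_n -> option 'I_(d ^ 2 - 1)}.
Local Notation sq_corr := (sq_corr lam psi).
Local Notation weight := (weight lam psi).

Let d_gt0 : (0 < d)%N. Proof. exact: leq_trans d_ge2. Qed.

Definition high_order (mu : mus) := (n.-1 <= #|supp mu|)%N.

(* Inequalities between sums of squared correlations are obtained by comparing
   integer multiplicities pointwise. *)
Definition wsum (a : mus -> nat) : R := \sum_mu (a mu)%:R * sq_corr mu.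

Lemma ler_wsum a b : (forall mu, a mu <= b mu)%N -> wsum a <= wsum b.
Proof.
by move=> ab; apply: ler_sum => mu _; rewrite ler_wpM2r ?sqr_ge0 ?ler_nat.
Qed.

Lemma wsumD a b : wsum (fun mu => a mu + b mu)%N = wsum a + wsum b.
Proof. by rewrite /wsum -big_split; apply: eq_bigr => mu _; rewrite natrD mulrDl. Qed.

Lemma wsumMn k a : wsum (fun mu => k * a mu)%N = k%:R * wsum a.
Proof. by rewrite /wsum mulr_sumr; apply: eq_bigr => mu _; rewrite natrM mulrA. Qed.

Lemma wsum_pred (P : pred mus) : wsum (fun mu => P mu) = \sum_(mu | P mu) sq_corr mu.
Proof.
rewrite /wsum [RHS]big_mkcond; apply: eq_bigr => mu _.
by case: (P mu); rewrite ?mul1r ?mul0r.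
Qed.

Lemma wsum_subset (S : {set 'I_n}) : wsum (fun mu => supp mu \subset S) = weight S.
Proof. exact: wsum_pred. Qed.

Lemma sum_high_orderE :
  \sum_(mu | high_order mu) sq_corr mu = (d ^ n)%:R - wsum (fun mu => ~~ high_order mu).
Proof.
have -> : (d ^ n)%:R = \sum_mu sq_corr mu.
  by rewrite -(weight_setT d_gt0 lam_gm psi_norm); apply: eq_bigl => mu; apply/subsetT.
by rewrite wsum_pred [in RHS](bigID high_order) /= addrK.
Qed.

Lemma sum_high_order_bipartite (beta : {set 'I_n}) : purity psi beta = 1 ->
  (2 <= #|beta|)%N -> (2 <= #|~: beta|)%N ->
  \sum_(mu | high_order mu) sq_corr mu
    <= (d ^ n)%:R - (d ^ #|beta|)%:R - (d ^ #|~: beta|)%:R + 1.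
Proof.
move=> pur_beta beta_ge2 betaC_ge2.
have small_low (S : {set 'I_n}) mu : (2 <= #|~: S|)%N -> supp mu \subset S ->
    ~~ high_order mu.
  move=> SC_ge2 /subset_leq_card; rewrite /high_order -ltnNge.
  have := cardsC S; rewrite card_ord; lia.
have counting :
    wsum (fun mu => supp mu \subset beta) + wsum (fun mu => supp mu \subset ~: beta)
    <= wsum (fun mu => ~~ high_order mu) + wsum (fun mu => supp mu \subset set0).
  rewrite -!wsumD; apply: ler_wsum => mu.
  case: (boolP (supp mu \subset beta)) => [muB|_];
    case: (boolP (supp mu \subset ~: beta)) => [muBC|_].
  - rewrite /high_order (_ : supp mu = set0); last first.
      by apply/eqP; rewrite (eq0_subset beta) muB.
    by rewrite sub0set cards0 leqn0; case: eqP => //; lia.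
  - by rewrite (small_low beta).
  - by rewrite (small_low (~: beta)) ?setCK.
  - by [].
move: counting; rewrite !wsum_subset (weight_set0 d_gt0 lam_gm psi_norm).
rewrite !(weight_purity1 d_gt0 lam_gm) ?purity_setC // sum_high_orderE; lra.
Qed.

Section SingleParty.
Variable g : {set 'I_n}.
Hypothesis card_g : #|g| = 1%N.
Hypothesis pur_g : purity psi g = 1.

Let card_gC : #|~: g| = n.-1.
Proof. by have := cardsC g; rewrite card_ord card_g; lia. Qed.

Definition avoiders (mu : mus) : nat := \sum_(i in ~: g) (supp mu \subset ~: g :\ i).

Lemma avoiders_le mu : (avoiders mu <= #|~: g :\: supp mu|)%N.
Proof.
rewrite /avoiders -sum1_card big_mkcond [leqRHS]big_mkcond /=.
apply: leq_sum => i _; case: (boolP (i \in ~: g)) => // gi.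
case: (boolP (supp mu \subset ~: g :\ i)) => // mu_i.
rewrite inE gi andbT; case: (boolP (i \in supp mu)) => //= i_mu.
by have := subsetP mu_i i i_mu; rewrite !inE eqxx.
Qed.

Lemma avoiders_eq0 mu : ~~ (supp mu \subset ~: g) -> avoiders mu = 0%N.
Proof.
move=> mu_g; rewrite /avoiders big1 // => i _; apply/eqP; rewrite eqb0.
by apply: contra mu_g => /subset_trans; apply; apply: subsetDl.
Qed.

Lemma avoiders_count mu :
  (avoiders mu + (n - 2) * (supp mu \subset g) <=
   (n - 2) * (~~ high_order mu) + (n - 1) * (supp mu \subset set0))%N.
Proof.
have := avoiders_le mu; rewrite /high_order; set s := supp mu.
case: (boolP (s \subset set0)) => [|s_ne0].
  rewrite subset0 => /eqP ->; rewrite sub0set cards0 setD0 card_gC.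
  by case: leqP; lia.
case: (boolP (s \subset g)) => [s_g | _].
  rewrite avoiders_eq0; last first.
    by apply: contra s_ne0 => s_gC; rewrite subset0 (eq0_subset g) s_g.
  have := subset_leq_card s_g; rewrite card_g; case: leqP => //; lia.
case: (boolP (s \subset ~: g)) => [s_gC | s_gC]; last by rewrite avoiders_eq0 // muln0.
have s_gt0 : (0 < #|s|)%N by rewrite lt0n cards_eq0 -subset0.
rewrite cardsD (setIidPr s_gC) card_gC; case: leqP; lia.
Qed.

Lemma wsum_avoiders : wsum avoiders = \sum_(i in ~: g) weight (~: g :\ i).
Proof.
rewrite /wsum; under eq_bigr do rewrite /avoiders natr_sum mulr_suml.
by rewrite exchange_big; apply: eq_bigr => i _; rewrite -wsum_subset.
Qed.

(* Monotonicity of the weight from [g] to [g :|: [set i]] gives a lower bound on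
   the purity of a two-party set, which is transferred to its complement. *)
Lemma weight_setCD1_ge i : i \in ~: g -> (d ^ (n - 3))%:R <= weight (~: g :\ i).
Proof.
move=> gi.
have card_gCi : #|~: g :\ i| = (n - 2)%N by have := cardsD1 i (~: g); rewrite gi; lia.
have card_pair : #|~: (~: g :\ i)| = 2%N.
  by have := cardsC (~: g :\ i); rewrite card_ord card_gCi; lia.
have g_pair : g \subset ~: (~: g :\ i) by apply/subsetP => k gk; rewrite !inE gk andbF.
have := weight_subset lam psi g_pair.
rewrite (weight_purity1 d_gt0 lam_gm) // card_g !(weightE d_gt0 lam_gm) card_pair.
rewrite card_gCi purity_setC; set P := complex.Re _ => dP.
have d_gt0R : (0 : R) < d%:R by rewrite ltr0n.
have dP1 : 1 <= d%:R * P.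
  by rewrite -(ler_pM2l d_gt0R) mulr1 mulrA -expr2 -natrX.
rewrite (_ : (n - 2 = (n - 3).+1)%N); last by lia.
rewrite !natrX exprS mulrAC mulrC.
by apply: ler_peMr; rewrite ?exprn_ge0 ?ler0n.
Qed.

Lemma sum_high_order_single :
  (n - 1)%:R * (d ^ (n - 3))%:R + (n - 2)%:R * d%:R
    <= (n - 2)%:R * ((d ^ n)%:R - \sum_(mu | high_order mu) sq_corr mu) + (n - 1)%:R.
Proof.
have counting : wsum avoiders + wsum (fun mu => (n - 2) * (supp mu \subset g))%N
    <= wsum (fun mu => (n - 2) * (~~ high_order mu))%N
     + wsum (fun mu => (n - 1) * (supp mu \subset set0))%N.
  by rewrite -!wsumD; apply: ler_wsum => mu; apply: avoiders_count.
move: counting; rewrite !wsumMn !wsum_subset (weight_set0 d_gt0 lam_gm psi_norm).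
rewrite (weight_purity1 d_gt0 lam_gm) // card_g expn1 wsum_avoiders sum_high_orderE.
have : (n - 1)%:R * (d ^ (n - 3))%:R <= \sum_(i in ~: g) weight (~: g :\ i).
  have card_gC' : #|~: g| = (n - 1)%N by rewrite card_gC; lia.
  rewrite mulr_natl -card_gC' -sumr_const; apply: ler_sum => i gi.
  exact: weight_setCD1_ge.
lra.
Qed.

End SingleParty.

Lemma bipartite_le_bound (beta : {set 'I_n}) : purity psi beta = 1 ->
  (2 <= #|beta|)%N -> (2 <= #|~: beta|)%N ->
  \sum_(mu | high_order mu) sq_corr mu <= biseparable_bound R n d.
Proof.
move=> pur_beta beta_ge2 betaC_ge2.
apply: le_trans (sum_high_order_bipartite pur_beta beta_ge2 betaC_ge2) _.
rewrite le_max; apply/orP; left.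
have card_beta := cardsC beta; rewrite card_ord in card_beta.
set u : R := (d ^ #|beta|)%:R; set v : R := (d ^ #|~: beta|)%:R.
have uv : (d%:R : R) ^+ n = u * v by rewrite -natrM -expnD card_beta natrX.
have := @amgm_sqrt R u v (ler0n _ _) (ler0n _ _).
rewrite natrX uv; lra.
Qed.

Lemma single_le_bound (g : {set 'I_n}) : #|g| = 1%N -> purity psi g = 1 ->
  \sum_(mu | high_order mu) sq_corr mu <= biseparable_bound R n d.
Proof.
move=> card_g pur_g; rewrite le_max; apply/orP; right.
apply: weighted_count_arith; first by rewrite ler_nat.
  by apply: exprn_ege1; rewrite ler1n; lia.
have dn : (d ^ n)%:R = d%:R * (d%:R : R) ^+ n.-1.
  by rewrite -natrX -natrM -expnS prednK //; lia.
have n2 : (n - 2)%:R = n%:R - 2 :> R by rewrite natrB //; lia.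
have n1 : (n - 1)%:R = n%:R - 1 :> R by rewrite natrB //; lia.
by have := sum_high_order_single card_g pur_g; rewrite dn n2 n1 natrX.
Qed.

Lemma biproduct_le_bound : biproduct psi ->
  \sum_(mu | high_order mu) sq_corr mu <= biseparable_bound R n d.
Proof.
move=> [beta [beta_ne0 beta_neT [phi [chi [phi_beta chi_betaC psiE]]]]].
have pur_beta : purity psi beta = 1 by apply: purity_product psiE psi_norm.
have pur_betaC : purity psi (~: beta) = 1 by rewrite purity_setC.
have card_beta := cardsC beta; rewrite card_ord in card_beta.
have beta_gt0 : (0 < #|beta|)%N by rewrite card_gt0.
have betaC_gt0 : (0 < #|~: beta|)%N.
  rewrite card_gt0; apply: contra beta_neT => /eqP betaC0.
  by rewrite -[beta]setCK betaC0 setC0.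
case: (eqVneq #|beta| 1%N) => [/single_le_bound | beta_ne1]; first exact.
case: (eqVneq #|~: beta| 1%N) => [/single_le_bound | betaC_ne1]; first exact.
by apply: (bipartite_le_bound pur_beta); lia.
Qed.

End BiproductBound.

Lemma sqr_convex_le (R : realFieldType) m (p c : 'I_m -> R) :
  (forall k, 0 <= p k) -> \sum_k p k = 1 ->
  (\sum_k p k * c k) ^+ 2 <= \sum_k p k * c k ^+ 2.
Proof.
move=> p_ge0 p_sum1; set M := \sum_k p k * c k.
have : 0 <= \sum_k p k * (c k - M) ^+ 2.
  by apply: sumr_ge0 => k _; rewrite mulr_ge0 ?sqr_ge0.
have -> : \sum_k p k * (c k - M) ^+ 2 =
    \sum_k p k * c k ^+ 2 - 2 * M * M + M ^+ 2 * \sum_k p k.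
  transitivity (\sum_k (p k * c k ^+ 2 - 2 * M * (p k * c k) + M ^+ 2 * p k)).
    by apply: eq_bigr => k _; ring.
  by rewrite big_split sumrB /= -!mulr_sumr.
rewrite p_sum1; lra.
Qed.

Lemma Re_sum (R : rcfType) (I : finType) (F : I -> R[i]) :
  complex.Re (\sum_i F i) = \sum_i complex.Re (F i).
Proof. exact: (raddf_sum (@complex.Re R : Rcomplex R -> R)). Qed.

Section Correlations.
Variable R : realType.
Variables n d : nat.
Variable lam : 'I_(d ^ 2 - 1) -> 'M[R[i]]_d.

Lemma C_nm1E (rho : op R n d) :
  C_nm1 lam rho = \sum_(mu | high_order mu) corr lam rho mu ^+ 2.
Proof.
rewrite /C_nm1 /tau_norm2 (partition_big (@supp n d) (fun A => n.-1 <= #|A|)%N) //=.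
apply: eq_bigr => A A_high; apply: eq_bigl => mu; rewrite /high_order.
by case: eqP => [-> | _]; rewrite ?A_high ?andbF.
Qed.

Lemma corr_mixture m (p : 'I_m -> R) (psi : 'I_m -> vec R n d) (rho : op R n d) :
  (forall x y, rho x y = \sum_k (p k)%:C%C * psi k x * cconj (psi k y)) ->
  forall mu, corr lam rho mu = \sum_k p k * complex.Re (expect lam (psi k) mu).
Proof.
move=> rhoE mu; rewrite /corr.
transitivity (complex.Re (\sum_k (p k)%:C%C * expect lam (psi k) mu)).
  congr complex.Re.
  under eq_bigr do under eq_bigr do rewrite rhoE mulr_suml.
  under eq_bigr do rewrite exchange_big.
  rewrite exchange_big; apply: eq_bigr => k _; rewrite /expect mulr_sumr.
  apply: eq_bigr => x _; rewrite mulr_sumr; apply: eq_bigr => y _; rewrite /cconj; ring.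
by rewrite Re_sum; apply: eq_bigr => k _; case: expect => a b /=; ring.
Qed.

End Correlations.

Unset Implicit Arguments.

Theorem corollary2 (R : realType) (n d : nat) (hn : (3 <= n)%N) (hd : (2 <= d)%N)
    (lam : 'I_(d ^ 2 - 1) -> 'M[R[i]]_d) (hlam : gm_basis lam)
    (rho : op R n d) (hrho : biseparable rho) :
  C_nm1 lam rho <=
    Num.max
      ((d%:R : R) ^+ n - 2 * Num.sqrt ((d%:R : R) ^+ n) + 1)
      (((d%:R : R) - 1) * ((d%:R : R) ^+ n.-1 - 1) + (d%:R : R) ^+ n.-1 - 1
        - (n%:R : R) / ((n%:R : R) - 1) * ((d%:R : R) ^+ (n - 3) - 1)).
Proof.
case: hrho => m [p [psi [p_ge0 p_sum1 psi_biprod rhoE]]].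
rewrite -/(biseparable_bound R n d) C_nm1E.
under eq_bigr do rewrite (corr_mixture lam rhoE).
apply: le_trans (_ : \sum_(mu | high_order mu) \sum_k p k * sq_corr lam (psi k) mu <= _).
  by apply: ler_sum => mu _; apply: sqr_convex_le.
rewrite exchange_big -[leRHS]mul1r -p_sum1 mulr_suml.
apply: ler_sum => k _; rewrite -mulr_sumr ler_wpM2l //.
by case: (psi_biprod k) => psi_norm; apply: biproduct_le_bound.
Qed.
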